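(* Let $a, b, n$ be positive integers with $b>1$, $n>1$ and $\gcd(r_b(n),a)=1$, and for $i = 2,\ldots,n$ set $\alpha_i := a_i + \sum_{j=i}^n (b-1)\, a_j$. Then: (a) $\alpha_i \in \operatorname{Ap}(S_a(b,n))$ for every $i = 2,\ldots,n$; (b) if $a < b^n - 1$ then $\alpha_2 > \alpha_3 > \cdots > \alpha_n$, and if $a > b^n-1$ then $\alpha_2 < \alpha_3 < \cdots < \alpha_n$; (c) for every $\omega \in \operatorname{Ap}(S_a(b,n))$ there exists $i \in \{2,\ldots,n\}$ such that $\omega \le \alpha_i$.
   Context: For $\ell \ge 1$, $r_b(\ell) = \sum_{j=0}^{\ell-1} b^j$, and $r_b(0)=0$. For $i \ge 1$, $a_i := r_b(n) + a\, r_b(i-1)$; $S_a(b,n)$ is the numerical semigroup generated by $\{a_i\}$, with multiplicity $a_1$. $\operatorname{Ap}(S_a(b,n)) = \{\omega \in S_a(b,n) : \omega - a_1 \notin S_a(b,n)\}$. *)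

From mathcomp Require Import all_boot.
Set Implicit Arguments. Unset Strict Implicit. Unset Printing Implicit Defensive.

Definition rb (b l : nat) : nat := \sum_(j < l) b ^ j.

(* a_i = r_b(n) + a * r_b(i-1), meaningful for i >= 1 *)
Definition agen (a b n i : nat) : nat := rb b n + a * rb b i.-1.

(* membership in S_a(b,n): the submonoid of (nat,+) generated by {a_i : i >= 1},
   i.e. finite sums (with repetition) of generators a_i, i >= 1. *)
Definition inS (a b n x : nat) : Prop :=
  exists s : seq nat, all (fun i => 0 < i) s /\ x = sumn (map (agen a b n) s).

(* Apery set with respect to the multiplicity a_1:
   w in S and w - a_1 (as an integer) not in S. *)
Definition inAp (a b n w : nat) : Prop :=
  inS a b n w /\ ~ (agen a b n 1 <= w /\ inS a b n (w - agen a b n 1)).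

Definition alpha (a b n i : nat) : nat :=
  agen a b n i + \sum_(i <= j < n.+1) (b - 1) * agen a b n j.

From mathcomp Require Import all_boot zify.
Set Implicit Arguments. Unset Strict Implicit. Unset Printing Implicit Defensive.

(* Write r = r_b(n).  A sum of N generators a_{e+1} equals N * r + a * T with T
   a sum of N repunits r_b(e), and N * r + a * T lies in S as soon as T is a sum
   of at most N repunits (pad with r_b(0) = 0).  In this language
   alpha_i = (1 + (b-1) k) r + a (r - k) with k = n + 1 - i, which gives (b).
   For (a): if alpha_i - r were in S, coprimality of r and a forces
   T = K r + (r - k), and a base-b digit count (through (b-1) r_b(e) + 1 = b^e)
   shows that such a T costs more than (b-1) k in N + K.  For (c): reducing T
   modulo r, every residue t has a representation by at most b + (b-1) d
   repunits, d = min(r - 1 - t, n - 2), which bounds w by alpha_{n-d}. *)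

Lemma eq_modn_coprime_mul2l d m x y :
  coprime d m -> m * x = m * y %[mod d] -> x = y %[mod d].
Proof.
move=> co_dm; wlog le_yx : x y / y <= x => [hwlog|].
  by case: (leqP y x) => [|/ltnW] le_xy /esym; [move/esym/hwlog | move/hwlog/esym]; apply.
move/eqP; rewrite !eqn_mod_dvd ?leq_mul2l ?le_yx ?orbT // -mulnBr Gauss_dvdr //.
by move=> dvd; apply/eqP; rewrite eqn_mod_dvd.
Qed.

Section Repunits.
Variable b : nat.

Lemma rb0 : rb b 0 = 0.
Proof. by rewrite /rb big_ord0. Qed.

Lemma rbS m : rb b m.+1 = rb b m + b ^ m.
Proof. by rewrite /rb big_ord_recr. Qed.

Lemma rbD m k : rb b (m + k) = rb b m + b ^ m * rb b k.
Proof.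
elim: k => [|k IHk]; first by rewrite addn0 rb0 muln0 addn0.
by rewrite addnS !rbS IHk expnD mulnDr addnA.
Qed.

Lemma rbSl m : rb b m.+1 = 1 + b * rb b m.
Proof. by rewrite -add1n rbD rbS rb0 expn0 expn1. Qed.

Lemma leq_rb : {homo rb b : m p / m <= p}.
Proof. by move=> m p /subnKC <-; rewrite rbD leq_addr. Qed.

Lemma dvdn_rb_mul q n : rb b n %| rb b (q * n).
Proof.
elim: q => [|q IHq]; first by rewrite mul0n rb0 dvdn0.
by rewrite mulSn rbD dvdn_add ?dvdn_mull.
Qed.

Lemma rb_mod n e : rb b e = rb b (e %% n) %[mod rb b n].
Proof.
rewrite {1}(divn_eq e n) addnC rbD.
have /dvdnP[c ->] := dvdn_rb_mul (e %/ n) n.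
by rewrite mulnA addnC modnMDl.
Qed.

Hypothesis b_gt0 : 0 < b.

Lemma rb_geom m : (b - 1) * rb b m + 1 = b ^ m.
Proof.
elim: m => [|m IHm]; first by rewrite rb0 muln0 expn0.
by rewrite rbS mulnDr expnS -IHm; nia.
Qed.

Lemma rb_ge m : m <= rb b m.
Proof.
elim: m => [|m IHm]; first by rewrite rb0.
by rewrite rbS -addn1 leq_add // expn_gt0 b_gt0.
Qed.

End Repunits.

Definition rbsum b (s : seq nat) : nat := sumn (map (rb b) s).
Definition powsum b (s : seq nat) : nat := sumn (map (expn b) s).

Lemma rbsum_cons b e s : rbsum b (e :: s) = rb b e + rbsum b s.
Proof. by []. Qed.

Lemma rbsum_cat b s1 s2 : rbsum b (s1 ++ s2) = rbsum b s1 + rbsum b s2.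
Proof. by rewrite /rbsum map_cat sumn_cat. Qed.

Lemma rbsum_nseq b k e : rbsum b (nseq k e) = k * rb b e.
Proof. by rewrite /rbsum map_nseq sumn_nseq mulnC. Qed.

Lemma powsum_rbsum b s : 0 < b -> (b - 1) * rbsum b s + size s = powsum b s.
Proof.
move=> b_gt0; elim: s => [|e s IHs] /=; first by rewrite /rbsum muln0.
move: IHs; rewrite /rbsum /powsum /= -(rb_geom b_gt0 e); lia.
Qed.

Lemma rbsum_modn b n s :
  rbsum b (map (modn^~ n) s) <= rbsum b s /\
  rbsum b (map (modn^~ n) s) = rbsum b s %[mod rb b n].
Proof.
elim: s => [|e s [le_s eq_s]] //=; rewrite /rbsum /= -!/(rbsum _ _); split.
  exact: leq_add (leq_rb b (leq_mod e n)) le_s.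
by rewrite -modnDm eq_s -(rb_mod b n e) modnDm.
Qed.

Section PowerSums.
Variable b : nat.
Hypothesis b_gt0 : 0 < b.

Lemma powsum_split s :
  powsum b s = count (pred1 0) s + b * powsum b [seq e.-1 | e <- s & e != 0].
Proof.
elim: s => [|[|e] s IHs] /=; rewrite /powsum /= -!/(powsum _ _) ?IHs ?muln0 //.
by rewrite expnS mulnDr addnCA.
Qed.

Lemma size_split s : size s = count (pred1 0) s + size [seq e.-1 | e <- s & e != 0].
Proof. by elim: s => [|[|e] s IHs] //=; rewrite IHs ?addnS. Qed.

(* A digit count: using powers up to [b ^ n] only, [K.+1 * b ^ n.+1 - 1] needs
   [b * K] copies of [b ^ n] plus the [(b - 1) * n.+1] digits of [b ^ n.+1 - 1],
   and the [z] extra units save at most [z] terms. *)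
Lemma powsum_lower_bound n s K z :
  all (fun e => e < n.+1) s -> powsum b s + z.+1 = K.+1 * b ^ n.+1 ->
  b * K + (b - 1) * n.+1 <= size s + z.
Proof.
elim: n s K z => [|n IHn] s K z s_lt eq_s.
  have s'0 : [seq e.-1 | e <- s & e != 0] = [::].
    rewrite (@eq_in_filter _ _ pred0) ?filter_pred0 // => e /(allP s_lt).
    by rewrite ltnS leqn0 => /eqP->.
  move: eq_s; rewrite (size_split s) (powsum_split s) s'0 /powsum /=; lia.
set s' := [seq e.-1 | e <- s & e != 0].
have s'_lt : all (fun e => e < n.+1) s'.
  apply/allP=> x /mapP[e]; rewrite mem_filter => /andP[e_neq0 /(allP s_lt)] lt_e ->.
  by case: e e_neq0 lt_e.
move: eq_s; rewrite (size_split s) (powsum_split s) -/s' expnS.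
set P := b ^ n.+1; set Q := powsum b s'; set x0 := count _ s => eq_s.
have {}eq_s : x0 + b * Q + z.+1 = b * (K.+1 * P) by rewrite mulnCA.
have ltQ : Q < K.+1 * P by rewrite -(ltn_pmul2l b_gt0) -eq_s; lia.
set z' := K.+1 * P - Q.+1.
have eq_z' : Q + z'.+1 = K.+1 * P by rewrite /z'; lia.
have := IHn s' K z' s'_lt eq_z'.
have : b * (Q + z'.+1) = x0 + b * Q + z.+1 by rewrite eq_z'.
have : z' <= b * z' by rewrite leq_pmull.
rewrite mulnDr mulnS (mulnS _ n.+1); clearbody z' x0 Q P; lia.
Qed.

End PowerSums.

Section Cost.
Variable b : nat.
Hypothesis b_gt1 : 1 < b.
Let b_gt0 : 0 < b := ltnW b_gt1.

Lemma rbsum_size_bound_lt n k s K :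
  all (fun e => e < n) s -> 0 < k < n -> rbsum b s = K * rb b n + (rb b n - k) ->
  (b - 1) * k < size s + K.
Proof.
case: n => [|m] s_lt /andP[k_gt0 k_lt] // eq_s; set r := rb b m.+1 in eq_s.
have k_le_r : k <= r by apply: leq_trans (ltnW k_lt) (rb_ge b_gt0 _).
have geom := rb_geom b_gt0 m.+1; rewrite -/r in geom.
rewrite ltnNge; apply/negP=> le_size.
have := powsum_lower_bound b_gt0 (K := K) (z := K + (b - 1) * k - size s) s_lt.
rewrite -(powsum_rbsum s b_gt0) eq_s.
have -> : (b - 1) * (K * r + (r - k)) = K * ((b - 1) * r) + (b - 1) * r - (b - 1) * k.
  by rewrite mulnDr mulnBr mulnCA addnBA // leq_mul2l k_le_r orbT.
have : (b - 1) * k <= (b - 1) * r by rewrite leq_mul2l k_le_r orbT.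
rewrite -geom mulSn mulnDr muln1 => le_k.
have : (b - 1) * k < (b - 1) * m.+1 by rewrite ltn_mul2l k_lt andbT subn_gt0.
have : K <= b * K by rewrite leq_pmull.
(* [lia] cannot see through [b - 1] inside products: generalize them first. *)
set X := (b - 1) * r in le_k *; set Y := (b - 1) * k in le_size le_k *.
clearbody X Y; lia.
Qed.

(* Reducing every exponent modulo [n] keeps the size and the residue modulo
   [r_b(n)] and does not increase the sum. *)
Lemma rbsum_size_bound n k s K :
  0 < k < n -> rbsum b s = K * rb b n + (rb b n - k) -> (b - 1) * k < size s + K.
Proof.
move=> /andP[k_gt0 k_lt] eq_s; set r := rb b n in eq_s.
have r_gt0 : 0 < r by have := rb_ge b_gt0 n; rewrite -/r; lia.
set s' := map (modn^~ n) s.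
have [le_s' eq_s'] := rbsum_modn b n s.
have s'_lt : all (fun e => e < n) s'.
  by apply/allP=> _ /mapP[e _ ->]; rewrite ltn_pmod // (ltn_trans k_gt0).
move: eq_s'; rewrite -/s' -/r eq_s modnMDl (@modn_small (r - k)) ?ltn_subrL ?k_gt0 // => mod_s'.
have := rbsum_size_bound_lt (k := k) (K := rbsum b s' %/ r) s'_lt.
rewrite k_gt0 k_lt size_map -/r {1}(divn_eq (rbsum b s') r) mod_s' => /(_ erefl erefl).
suff : rbsum b s' %/ r <= K by lia.
by rewrite -(leq_pmul2r r_gt0) -(leq_add2r (r - k)) -eq_s -{1}mod_s' -divn_eq.
Qed.

End Cost.

Section Representations.
Variable b : nat.
Hypothesis b_gt0 : 0 < b.

Lemma rbsum_pred u : 0 < rbsum b u ->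
  exists2 u', rbsum b u' = (rbsum b u).-1 & size u' <= size u + (b - 1).
Proof.
elim: u => [|e u IHu] //; rewrite rbsum_cons; case: e => [|[|e]] /=.
- by rewrite rb0 => /IHu[u' eq_u' le_u']; exists u' => //; lia.
- by rewrite rbS rb0 expn0 => _; exists u => //; lia.
move=> _; exists (nseq b e.+1 ++ u).
  by rewrite rbsum_cat rbsum_nseq (rbSl b e.+1); lia.
by rewrite size_cat size_nseq; lia.
Qed.

(* Start from [r_b(n) - 1 = b * r_b(n-1)] and remove one unit at a time. *)
Lemma rbsum_repr_near n d : 0 < n -> d < rb b n ->
  exists2 u, rbsum b u = rb b n - d.+1 & size u <= b + (b - 1) * d.
Proof.
case: n => [|n] // _; elim: d => [|d IHd] lt_d.
  by exists (nseq b n); rewrite ?rbsum_nseq ?size_nseq ?rbSl; lia.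
have [u eq_u le_u] := IHd (ltnW lt_d).
have [|u' eq_u' le_u'] := rbsum_pred (u := u); first by rewrite eq_u; lia.
by exists u'; rewrite ?eq_u' ?eq_u ?mulnS; lia.
Qed.

Lemma rbsum_repr_greedy m t : t <= b * rb b m.+1 ->
  exists2 u, rbsum b u = t & size u <= b + (b - 1) * m.
Proof.
elim: m t => [|m IHm] t.
  by rewrite rbSl rb0 muln0 addn0 muln1 => le_t; exists (nseq t 0.+1);
     rewrite ?rbsum_nseq ?size_nseq ?rbSl ?rb0; lia.
set R := rb b m.+2; have R_def : R = 1 + b * rb b m.+1 by rewrite /R rbSl.
have R_gt0 : 0 < R by rewrite R_def.
move=> le_t; have [q_lt | q_eq] := ltnP (t %/ R) b; last first.
  have eq_t : t = b * R.
    apply/eqP; rewrite eqn_leq le_t (leq_trans _ (leq_divM t R)) //.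
    by rewrite leq_mul2r q_eq orbT.
  by exists (nseq b m.+2); rewrite ?rbsum_nseq ?size_nseq ?eq_t ?(mulnC b); lia.
have [u eq_u le_u] : exists2 u, rbsum b u = t %% R & size u <= b + (b - 1) * m.
  by apply: IHm; have := ltn_pmod t R_gt0; rewrite R_def; lia.
exists (nseq (t %/ R) m.+2 ++ u).
  by rewrite rbsum_cat rbsum_nseq eq_u -/R -divn_eq.
by rewrite size_cat size_nseq mulnS; lia.
Qed.

Lemma rbsum_short_repr n t : 1 < n -> t < rb b n ->
  exists d, [/\ d <= n - 2, t + d < rb b n &
                 exists2 u, rbsum b u = t & size u <= b + (b - 1) * d].
Proof.
move=> n_gt1 lt_t; have [near | far] := leqP (rb b n - t.+1) (n - 2).
  exists (rb b n - t.+1); split; [done | lia |].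
  have [|u eq_u le_u] := rbsum_repr_near (ltnW n_gt1) (d := rb b n - t.+1); first lia.
  by exists u; rewrite // eq_u; lia.
exists (n - 2); split; [done | lia |].
case: n n_gt1 far lt_t => [|[|n]] // _ _; rewrite rbSl => lt_t.
by apply: rbsum_repr_greedy; rewrite !subSS subn0; lia.
Qed.

End Representations.

Lemma sumn_agen a b n s :
  sumn (map (agen a b n) s) = size s * rb b n + a * rbsum b (map predn s).
Proof.
elim: s => [|e s IHs] /=; first by rewrite muln0.
by rewrite IHs rbsum_cons /agen mulSn mulnDr; lia.
Qed.

Lemma agen1 a b n : agen a b n 1 = rb b n.
Proof. by rewrite /agen rb0 muln0 addn0. Qed.

Lemma inS_rbsumP a b n x : inS a b n x -> exists u, x = size u * rb b n + a * rbsum b u.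
Proof. by move=> [s [_ ->]]; exists (map predn s); rewrite sumn_agen size_map. Qed.

Lemma inS_rbsum a b n N u : size u <= N -> inS a b n (N * rb b n + a * rbsum b u).
Proof.
move=> le_u; exists (map succn (u ++ nseq (N - size u) 0)); split.
  by apply/allP=> _ /mapP[e _ ->].
rewrite sumn_agen size_map size_cat size_nseq subnKC // (mapK succnK).
by rewrite rbsum_cat rbsum_nseq rb0 muln0 addn0.
Qed.

Lemma sum_rb b m n : 0 < b -> m <= n ->
  (b - 1) * \sum_(m <= j < n) rb b j + (n - m) + rb b m = rb b n.
Proof.
move=> b_gt0; elim: n => [|n IHn]; first by rewrite leqn0 => /eqP->; rewrite big_geq ?muln0.
rewrite leq_eqVlt => /predU1P[->|]; first by rewrite big_geq ?muln0 ?subnn.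
rewrite ltnS => le_mn; rewrite big_nat_recr //= mulnDr rbS -(rb_geom b_gt0 n) -IHn //.
lia.
Qed.

Lemma alphaE a b n i : 0 < b -> 0 < i <= n.+1 ->
  alpha a b n i = (1 + (b - 1) * (n.+1 - i)) * rb b n + a * (rb b n - (n.+1 - i)).
Proof.
case: i => [|i] // b_gt0 le_i; rewrite /alpha -big_distrr big_split /=.
rewrite sum_nat_const_nat -big_distrr /= subSS.
have -> : \sum_(i.+1 <= j < n.+1) rb b j.-1 = \sum_(i <= j < n) rb b j.
  by rewrite -addn1 big_addn subn1; apply: eq_bigr => j _; rewrite addn1.
have := sum_rb b_gt0 (m := i) (n := n) le_i; set S := \sum_(i <= j < n) _ => eq_S; clearbody S.
have -> : rb b n - (n - i) = rb b i + (b - 1) * S by rewrite -eq_S addnAC addnK addnC.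
rewrite /agen /= mulnDr mulnA mulnCA mulnDl mul1n mulnDr.
by rewrite -!addnA (addnCA (a * rb b i)).
Qed.

Lemma alpha_step a b n i : 0 < b -> 0 < i < n ->
  alpha a b n i + a = alpha a b n i.+1 + (b - 1) * rb b n.
Proof.
move=> b_gt0 /andP[i_gt0 /ltnW i_le].
rewrite !alphaE ?i_gt0 ?(leqW i_le) ?ltnS ?i_le // subSS.
have := rb_ge b_gt0 n; set k := n - i => le_n.
have -> : n.+1 - i = k.+1 by rewrite /k; lia.
have -> : rb b n - k = (rb b n - k.+1).+1 by rewrite /k; lia.
by rewrite !mulnS !mulnDl; set B := b - 1; clearbody B; lia.
Qed.

Section AlphaForm.
Variables a b n k : nat.
Hypothesis b_gt1 : 1 < b.
Hypothesis k_gt0 : 0 < k.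
Hypothesis k_lt : k < n.
Let b_gt0 : 0 < b := ltnW b_gt1.
Let r := rb b n.
Let k_lt_r : k < r := leq_trans k_lt (rb_ge b_gt0 n).

Lemma inS_alpha_form : inS a b n ((1 + (b - 1) * k) * r + a * (r - k)).
Proof.
have [|u eq_u le_u] := rbsum_repr_near b_gt0 (d := k.-1) (ltn_trans k_gt0 k_lt).
  by rewrite -/r prednK // ltnW.
rewrite prednK // -/r in eq_u; rewrite -eq_u; apply: inS_rbsum.
move: le_u; rewrite -{2}(prednK k_gt0) mulnS.
have : b = (b - 1).+1 by lia.
by set B := b - 1; clearbody B; lia.
Qed.

Lemma alpha_form_subn_notinS : 0 < a -> coprime r a ->
  ~ inS a b n ((1 + (b - 1) * k) * r + a * (r - k) - r).
Proof.
move=> a_gt0 co_ra /inS_rbsumP[u]; rewrite -/r; set T := rbsum b u => eq_u.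
have eq_ru : (size u).+1 * r + a * T = (1 + (b - 1) * k) * r + a * (r - k).
  by rewrite mulSn -addnA -eq_u subnKC // -addnA leq_addr.
have /eq_modn_coprime_mul2l : a * T = a * (r - k) %[mod r].
  by rewrite -(modnMDl (size u).+1) eq_ru modnMDl.
rewrite (@modn_small (r - k)) ?ltn_subrL ?k_gt0 ?(ltn_trans k_gt0 k_lt_r) //.
move=> /(_ co_ra) mod_T; set q := T %/ r.
have eq_T : T = q * r + (r - k) by rewrite {1}(divn_eq T r) mod_T.
have size_u := rbsum_size_bound b_gt1 (s := u) (introT andP (conj k_gt0 k_lt)) eq_T.
have /eqP : (size u + a * q) * r = (b - 1) * k * r.
  move: eq_ru; rewrite eq_T mulSn !mulnDl mulnDr mulnA mul1n.
  by set B := b - 1; clearbody B; lia.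
rewrite eqn_pmul2r ?(ltn_trans k_gt0 k_lt_r) // => /eqP eq_size.
have : q <= a * q by rewrite leq_pmull.
by set B := b - 1 in size_u eq_size *; clearbody B; lia.
Qed.

End AlphaForm.

Lemma alpha_in_Ap a b n i : 0 < a -> 1 < b -> coprime (rb b n) a -> 2 <= i <= n ->
  inAp a b n (alpha a b n i).
Proof.
move=> a_gt0 b_gt1 co_ra /andP[i_ge2 le_in]; have b_gt0 := ltnW b_gt1.
have k_gt0 : 0 < n.+1 - i by lia.
have k_lt : n.+1 - i < n by lia.
rewrite /inAp agen1 alphaE //; last by apply/andP; split; lia.
split; first exact: inS_alpha_form.
by case=> _; apply: alpha_form_subn_notinS.
Qed.

Lemma Ap_le_alpha a b n w : 1 < b -> 1 < n -> inAp a b n w ->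
  exists2 i, 2 <= i <= n & w <= alpha a b n i.
Proof.
move=> b_gt1 n_gt1; have b_gt0 := ltnW b_gt1.
rewrite /inAp agen1 => -[/inS_rbsumP[s eq_w] not_sub].
have := rb_ge b_gt0 n; set r := rb b n in not_sub * => le_nr; set T := rbsum b s in eq_w.
have r_gt0 : 0 < r by lia.
have [d [le_d lt_d [u eq_u le_u]]] := rbsum_short_repr b_gt0 n_gt1 (ltn_pmod T r_gt0).
move: (divn_eq T r) lt_d eq_u; rewrite -/r; set t := T %% r; set q := T %/ r.
clearbody t q => eq_T lt_d eq_u; set M := size s + a * q.
have {}eq_w : w = M * r + a * t by rewrite eq_w eq_T /M mulnDl -mulnA -addnA -mulnDr.
clearbody M; exists (n - d); first by apply/andP; split; lia.
have le_M : M <= size u.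
  rewrite leqNgt; apply/negP => lt_uM; apply: not_sub; rewrite eq_w; split.
    by apply: leq_trans (leq_addr _ _); rewrite leq_pmull //; lia.
  have M_gt0 : 0 < M by lia.
  have -> : M * r + a * t - r = M.-1 * r + a * rbsum b u.
    by rewrite eq_u -{1}(prednK M_gt0) mulSn -addnA addKn.
  by apply: inS_rbsum; lia.
rewrite eq_w alphaE //; last by apply/andP; split; lia.
rewrite -/r; have -> : n.+1 - (n - d) = d.+1 by lia.
apply: leq_add; last by rewrite leq_mul2l; apply/orP; right; lia.
rewrite leq_mul2r; apply/orP; right; apply: leq_trans le_M (leq_trans le_u _).
by rewrite mulnS; lia.
Qed.

Theorem lemma21 (a b n : nat) :
  0 < a -> 1 < b -> 1 < n -> coprime (rb b n) a ->
  [/\ (forall i, 2 <= i <= n -> inAp a b n (alpha a b n i)),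
      (a < b ^ n - 1 -> forall i, 2 <= i < n -> alpha a b n i.+1 < alpha a b n i),
      (b ^ n - 1 < a -> forall i, 2 <= i < n -> alpha a b n i < alpha a b n i.+1)
    & (forall w, inAp a b n w -> exists2 i, 2 <= i <= n & w <= alpha a b n i)].
Proof.
move=> a_gt0 b_gt1 n_gt1 co_ra; have b_gt0 := ltnW b_gt1.
have geom : (b - 1) * rb b n = b ^ n - 1 by rewrite -(rb_geom b_gt0 n) addnK.
have step i : 2 <= i < n -> alpha a b n i + a = alpha a b n i.+1 + (b ^ n - 1).
  by move=> /andP[i_ge2 lt_i]; rewrite -geom alpha_step // lt_i (ltnW i_ge2).
split.
- by move=> i; apply: alpha_in_Ap.
- by move=> lt_a i /step; lia.
- by move=> gt_a i /step; lia.
- by move=> w; apply: Ap_le_alpha.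
Qed.
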